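(* Let $\mathcal{A}$ be an $(a,b)$-absorbing set in a Tanner graph with $b\geq 1$, and run the syndrome-based Gallager-B decoder on the absorbing set graph $\mathcal{G}_{\mathcal{A}}$ with error pattern $e=\vec{1}$, i.e. every variable node of $\mathcal{A}$ is in error. Then $\mathcal{A}$ is a failure inducing set for $\mathcal{G}_{\mathcal{A}}$. More precisely: - the input syndrome is $1$ exactly at the check nodes of $\mathcal{O}_{\mathcal{A}}$; - the estimated syndrome equals $\vec{0}$ at every iteration; - consequently the estimated syndrome never matches the input syndrome at the $b$ odd-degree check nodes.
   Context: Tanner graph: a bipartite graph $\mathcal{G}=(V,W;E)$ with variable nodes $V$ and check nodes $W$. Equivalently, a binary parity-check matrix $H$ with rows indexed by $W$ and columns by $V$, where $h_{c,v}=1$ iff $(v,c)\in E$. Notation for a subset $S\subseteq V$: - $\mathcal{N}(S)$ is the set of check nodes adjacent to some vertex of $S$. - $\mathcal{G}_S$ is the subgraph with vertex set $S\cup\mathcal{N}(S)$ and all edges of $\mathcal{G}$ between $S$ and $\mathcal{N}(S)$. - $\mathcal{O}_S$ (resp. $\mathcal{E}_S$) is the set of check nodes of $\mathcal{N}(S)$ having odd (resp. even) degree in $\mathcal{G}_S$. An $(a,b)$-absorbing set is a set $\mathcal{A}\subseteq V$ such that: - $|\mathcal{A}|=a$; - $|\mathcal{O}_{\mathcal{A}}|=b$; - every $v\in\mathcal{A}$ has strictly more neighbours in $\mathcal{E}_{\mathcal{A}}$ than in $\mathcal{O}_{\mathcal{A}}$. $\mathcal{G}_{\mathcal{A}}$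 is called the absorbing set graph and $H_{\mathcal{A}}$ denotes its parity-check matrix. Syndrome-based Gallager-B decoder on a Tanner graph $\mathcal{G}$: - An error pattern is $e\in\mathbb{F}_2^V$, the indicator of the variable nodes in error. Its input syndrome is $\sigma\in\mathbb{F}_2^W$ with $\sigma_c=\sum_{v\in\mathcal{N}(c)}e_v \bmod 2$. - Initially every variable node sends $0$ on every edge. - In each iteration, each check node $c$ sends to a neighbour $v$ the value $\sigma_c+\sum_{v'\in\mathcal{N}(c)\setminus\{v\}} m_{v'\to c} \pmod 2$, where the $m_{v'\to c}$ are the current variable-to-check messages. - Each variable node $v$ then sends to a neighbour $c$ the majority of the messages it received from its neighbours other than $c$. It sends $0$ on a tie, in particular when $v$ has no other neighbour. - The estimated error $\hat e_v$ is the majority of all incoming check-to-variable messages at $v$, and $0$ on a tie. - The estimated syndrome at $c$ is the mod-2 sum of the variable-to-check messages arriving at $c$. - Before any message passing, all messages are $0$, the estimated syndrome is $\vec 0$ and $\hat e=\vec 0$. - The decoder halts and outputs $\hat e$ as soon as the estimated syndrome equals $\sigma$; otherwise it iterates indefinitely. Decoding failure occurs if either: - the decoder never halts (the estimated syndrome is never eventually equal to $\sigma$, or the estimates fail to converge); or - it halts with $\hat e$ such that $e+\hat e$ is not in the $\mathbb{F}_2$-rowspace of the parity-check matrix of the graph being decoded on (a logical error). Halting with $e+\hat e$ in that rowspace is success (a degenerate error). A set $\mathcal{F}\subseteq V$ is a failure inducing set (for decoding on $\mathcal{G}$) if decoding with $e$ equal to the indicator of $\mathcal{F}$, all other variable nodes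 being correct, results in decoding failure. A nonempty $\mathcal{T}\subseteq V$ is a trapping set if some subset of $\mathcal{T}$ is failure inducing. *)

From mathcomp Require Import all_boot.
Set Implicit Arguments. Unset Strict Implicit. Unset Printing Implicit Defensive.

(* A Tanner graph is given by finite types V (variable nodes), W (check nodes)
   and an adjacency relation adj v c  <=>  (v,c) in E  <=>  h_{c,v} = 1. *)
Section Tanner.
Variables (V W : finType) (adj : V -> W -> bool).

Definition nbrW (v : V) : {set W} := [set c | adj v c].
Definition nbrV (c : W) : {set V} := [set v | adj v c].

Definition nbhd (S : {set V}) : {set W} := [set c | [exists v in S, adj v c]].
Definition degS (S : {set V}) (c : W) : nat := #|[set v in S | adj v c]|.
Definition odd_checks (S : {set V}) : {set W} :=
  [set c in nbhd S | odd (degS S c)].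
Definition even_checks (S : {set V}) : {set W} :=
  [set c in nbhd S | ~~ odd (degS S c)].

Definition absorbing_set (A : {set V}) (a b : nat) : Prop :=
  [/\ #|A| = a, #|odd_checks A| = b &
      forall v, v \in A ->
        #|[set c in even_checks A | adj v c]| > #|[set c in odd_checks A | adj v c]| ].

(* F_2 arithmetic: bool with xor (addb). *)
Definition syndrome (e : V -> bool) (c : W) : bool :=
  \big[addb/false]_(v in nbrV c) e v.

(* majority of the messages f x, x in S; 0 (false) on a tie *)
Definition maj {T : finType} (S : {set T}) (f : T -> bool) : bool :=
  #|[set x in S | ~~ f x]| < #|[set x in S | f x]|.

Definition cv_msg (sigma : W -> bool) (m : V -> W -> bool) (c : W) (v : V) : bool :=
  sigma c (+) \big[addb/false]_(v' in nbrV c :\ v) m v' c.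

(* variable-to-check messages after t iterations (m v c = message v -> c) *)
Fixpoint vc_msg (sigma : W -> bool) (t : nat) : V -> W -> bool :=
  match t with
  | 0 => fun _ _ => false
  | t'.+1 => fun v c =>
      maj (nbrW v :\ c) (fun c' => cv_msg sigma (vc_msg sigma t') c' v)
  end.

Definition est_err (sigma : W -> bool) (t : nat) (v : V) : bool :=
  match t with
  | 0 => false
  | t'.+1 => maj (nbrW v) (fun c => cv_msg sigma (vc_msg sigma t') c v)
  end.

Definition est_syn (sigma : W -> bool) (t : nat) (c : W) : bool :=
  \big[addb/false]_(v in nbrV c) vc_msg sigma t v c.

(* the decoder's halting test at iteration t *)
Definition syn_match (sigma : W -> bool) (t : nat) : Prop :=
  forall c, est_syn sigma t c = sigma c.

Definition in_rowspace (x : V -> bool) : Prop :=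
  exists S : {set W}, forall v, x v = \big[addb/false]_(c in S) adj v c.

Definition decoding_failure (e : V -> bool) : Prop :=
  let sigma := syndrome e in
  (forall t, ~ syn_match sigma t) \/
  (exists t, [/\ syn_match sigma t,
                 (forall t', t' < t -> ~ syn_match sigma t') &
                 ~ in_rowspace (fun v => e v (+) est_err sigma t v)]).

Definition failure_inducing (F : {set V}) : Prop :=
  decoding_failure (fun v => v \in F).

Definition absG (A : {set V}) :
  {v : V | v \in A} -> {c : W | c \in nbhd A} -> bool :=
  fun v c => adj (val v) (val c).

End Tanner.

Arguments absG {V W} adj A _ _.

From mathcomp Require Import all_boot.

Set Implicit Arguments.
Unset Strict Implicit.
Unset Printing Implicit Defensive.

(* On the absorbing set graph G_A with every variable in error,
   the input syndrome is the parity of the check degrees, i.e. it is 1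
   exactly on O_A.  We show that the all-zero variable-to-check messages are
   a fixed point of the Gallager-B iteration: while all incoming
   variable-to-check messages are 0, a check c simply forwards sigma_c, so a
   variable v sends the majority of sigma over its other neighbours; by the
   absorbing-set condition v sees strictly more checks with sigma = 0 (in E_A)
   than with sigma = 1 (in O_A), and dropping one neighbour cannot turn this
   minority into a majority.  Hence every message, and so every estimated
   syndrome, stays 0 forever, while sigma is 1 on the b >= 1 checks of O_A:
   the decoder never halts. *)

Lemma big_addb_true (T : finType) (S : {set T}) :
  \big[addb/false]_(i in S) true = odd #|S|.
Proof. by rewrite big_const; elim: #|S| => //= n ->. Qed.

Lemma card_sig_set (T : finType) (P Q : pred T) :
  #|[set x : {x | P x} | Q (val x)]| = #|[set x | P x && Q x]|.
Proof.
rewrite -(card_imset _ val_inj); apply: eq_card => x; rewrite [in RHS]inE.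
apply/imsetP/andP => [[y]|[Px Qx]].
  by rewrite inE => Qy ->; split => //; exact: valP.
by exists (exist _ x Px) => //; rewrite inE.
Qed.

Lemma maj_eq_in (T : finType) (S : {set T}) (f g : T -> bool) :
  {in S, f =1 g} -> maj S f = maj S g.
Proof.
move=> fg; rewrite /maj.
have eq_sel (h : bool -> bool) : [set x in S | h (f x)] = [set x in S | h (g x)].
  by apply/setP => x; rewrite !inE; case: (boolP (x \in S)) => // /fg ->.
by rewrite (eq_sel negb) (eq_sel id).
Qed.

Lemma maj_setD1_minority (T : finType) (S : {set T}) (f : T -> bool) (c : T) :
  #|[set x in S | f x]| < #|[set x in S | ~~ f x]| -> ~~ maj (S :\ c) f.
Proof.
move=> minority; rewrite /maj -leqNgt.
have ones_le : #|[set x in S :\ c | f x]| <= #|[set x in S | f x]|.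
  by apply/subset_leq_card/subsetP => x; rewrite !inE => /andP[/andP[_ ->] ->].
have zeros_ge : #|[set x in S | ~~ f x]| <= #|[set x in S :\ c | ~~ f x]|.+1.
  rewrite (cardsD1 c [set x in S | ~~ f x]).
  have -> : [set x in S | ~~ f x] :\ c = [set x in S :\ c | ~~ f x].
    by apply/setP => x; rewrite !inE andbA.
  by case: (_ \in _).
by rewrite -ltnS (leq_trans _ zeros_ge) // (leq_ltn_trans ones_le).
Qed.

Section Decoder.
Variables (V W : finType) (adj : V -> W -> bool).

Lemma vc_msg_ext (s1 s2 : W -> bool) :
  s1 =1 s2 -> forall t v c, vc_msg adj s1 t v c = vc_msg adj s2 t v c.
Proof.
move=> eq_s; elim=> [//|t IH] v c /=; apply: maj_eq_in => c' _.
by rewrite /cv_msg eq_s; congr (_ (+) _); apply: eq_bigr => i _; exact: IH.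
Qed.

Lemma est_syn_ext (s1 s2 : W -> bool) :
  s1 =1 s2 -> forall t c, est_syn adj s1 t c = est_syn adj s2 t c.
Proof. by move=> eq_s t c; apply: eq_bigr => i _; exact: vc_msg_ext. Qed.

(* Fixed point of the iteration: if every variable node, fed the raw
   syndrome by its other neighbours, would answer 0, then all
   variable-to-check messages are 0 at every iteration. *)
Lemma vc_msg_zero_fixpoint (sigma : W -> bool) :
  (forall v c, ~~ maj (nbrW adj v :\ c) sigma) ->
  forall t v c, vc_msg adj sigma t v c = false.
Proof.
move=> quiet; elim=> [//|t IH] v c /=.
have forward : {in nbrW adj v :\ c,
    (fun c' => cv_msg adj sigma (vc_msg adj sigma t) c' v) =1 sigma}.
  by move=> c' _; rewrite /cv_msg big1 ?addbF // => v' _; rewrite IH.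
by rewrite (maj_eq_in forward) (negbTE (quiet v c)).
Qed.

Lemma est_syn_zero_fixpoint (sigma : W -> bool) :
  (forall v c, ~~ maj (nbrW adj v :\ c) sigma) ->
  forall t c, est_syn adj sigma t c = false.
Proof.
by move=> quiet t c; rewrite /est_syn big1 // => v _; rewrite vc_msg_zero_fixpoint.
Qed.

End Decoder.

Section AbsorbingSetGraph.
Variables (V W : finType) (adj : V -> W -> bool) (A : {set V}).

Let G := absG adj A.

Lemma odd_checks_sub : odd_checks adj A \subset nbhd adj A.
Proof. by apply/subsetP => c; rewrite inE => /andP[]. Qed.

Lemma even_checks_sub : even_checks adj A \subset nbhd adj A.
Proof. by apply/subsetP => c; rewrite inE => /andP[]. Qed.

Lemma absG_syndrome_ones (c : {c : W | c \in nbhd adj A}) :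
  syndrome G (fun _ => true) c = (val c \in odd_checks adj A).
Proof.
rewrite /syndrome big_addb_true inE (valP c) /= /degS /nbrV.
by rewrite -(card_sig_set (fun v => v \in A) (fun v => adj v (val c))).
Qed.

Lemma absG_card_nbrW (v : {v : V | v \in A}) (X : {set W}) :
  X \subset nbhd adj A ->
  #|[set c in nbrW G v | val c \in X]| = #|[set c in X | adj (val v) c]|.
Proof.
move=> sXN; have -> : [set c in nbrW G v | val c \in X] =
    [set c : {c : W | c \in nbhd adj A} | adj (val v) (val c) && (val c \in X)].
  by apply/setP => c; rewrite !inE.
rewrite (card_sig_set (mem (nbhd adj A)) (fun c => adj (val v) c && (c \in X))).
apply: eq_card => c; case: (boolP (c \in X)) => cX.
  by have := subsetP sXN c cX; rewrite !inE cX => ->; rewrite andbT.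
by rewrite !inE (negbTE cX) !andbF.
Qed.

Lemma even_checks_sig (c : {c : W | c \in nbhd adj A}) :
  (val c \in even_checks adj A) = ~~ (val c \in odd_checks adj A).
Proof. by have := valP c; rewrite !inE => ->. Qed.

Lemma absorbing_quiet (a b : nat) : absorbing_set adj A a b ->
  forall v c, ~~ maj (nbrW G v :\ c) (syndrome G (fun _ => true)).
Proof.
case=> _ _ more_even v c; apply: maj_setD1_minority.
have -> : [set x in nbrW G v | syndrome G (fun _ => true) x] =
          [set x in nbrW G v | val x \in odd_checks adj A].
  by apply: eq_finset => x; rewrite absG_syndrome_ones.
have -> : [set x in nbrW G v | ~~ syndrome G (fun _ => true) x] =
          [set x in nbrW G v | val x \in even_checks adj A].
  by apply: eq_finset => x; rewrite absG_syndrome_ones even_checks_sig.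
rewrite !absG_card_nbrW ?odd_checks_sub ?even_checks_sub //.
exact: more_even (valP v).
Qed.

End AbsorbingSetGraph.

Theorem theorem1 (V W : finType) (adj : V -> W -> bool) (A : {set V})
    (a b : nat) (hA : absorbing_set adj A a b) (hb : 1 <= b) :
  let G := absG adj A in
  let sigma := syndrome G (fun _ => true) in
  [/\ failure_inducing G setT,
      (forall c, sigma c = (val c \in odd_checks adj A)),
      (forall t c, est_syn G sigma t c = false) &
      (forall t c, val c \in odd_checks adj A -> est_syn G sigma t c != sigma c)].
Proof.
move=> G sigma.
have sigmaE := @absG_syndrome_ones _ _ adj A.
have est_zero := est_syn_zero_fixpoint (absorbing_quiet hA).
have mismatch t c : val c \in odd_checks adj A -> est_syn G sigma t c != sigma c.
  by move=> c_odd; rewrite est_zero /sigma sigmaE c_odd.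
split=> //; left => t halts.
have [c0 c0_odd] : exists c0, c0 \in odd_checks adj A.
  by apply/card_gt0P; case: hA => _ -> _.
have c0_N : c0 \in nbhd adj A by exact: subsetP (odd_checks_sub adj A) c0 c0_odd.
have sigma_setT : syndrome G (fun v => v \in setT) =1 sigma.
  by move=> c; apply: eq_bigr => v _; rewrite in_setT.
have := mismatch t (exist _ c0 c0_N) c0_odd.
by rewrite -(est_syn_ext G sigma_setT) halts sigma_setT eqxx.
Qed.
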